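(* Let $E$ be a finite set and $\mathcal{A}$ a set-arrangement on $E$, with local Lie algebras $L_A=\mathcal{F}(A)/\langle R_A\rangle$, $R_A\subseteq[\mathcal{F}(A),\mathcal{F}(A)]$, for $A\in\mathcal{A}$, and let $\mathcal{L}=\mathcal{F}(E)/\langle R\rangle$ with $$R=\bigcup_{A\in\mathcal{A}}R_A\ \cup\ \{[x,y]:\ x,y\in E,\ \{x,y\}\not\subseteq A \text{ for every } A\in\mathcal{A}\}.$$ Let $\mathcal{B}_1,\dots,\mathcal{B}_k$ be pairwise disjoint subsets of $\mathcal{A}$, each closed in $\mathcal{A}$, with $\bigcup_{i=1}^k\mathcal{B}_i=\mathcal{A}$. For each $i$ let $\pi_{\mathcal{B}_i}:\mathcal{L}\to L_{\mathcal{B}_i}$ be the Lie homomorphism sending the elements of $E\setminus\mathrm{supp}(\mathcal{B}_i)$ to $0$ and fixing those of $\mathrm{supp}(\mathcal{B}_i)$, and $s_{\mathcal{B}_i}:L_{\mathcal{B}_i}\to\mathcal{L}$ the Lie homomorphism induced by the inclusion $\mathrm{supp}(\mathcal{B}_i)\subseteq E$. Let $\pi'_{\mathcal{B}_i}$, $s'_{\mathcal{B}_i}$ be their restrictions to the derived algebras, and let $J$ be the kernel of the surjective Lie homomorphism $\bigoplus_{i=1}^k\pi'_{\mathcal{B}_i}:\mathcal{L}'\to\bigoplus_{i=1}^kL'_{\mathcal{B}_i}$. Then: (1) $J$ is generated as an ideal of $\mathcal{L}$ by the elements $[x,s'_{\mathcal{B}_i}(u)]$ for $i=1,\dots,k$,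 $u\in L'_{\mathcal{B}_i}$ and $x\in E\setminus\mathrm{supp}(\mathcal{B}_i)$; (2) $J=0$ if and only if $[x,s'_{\mathcal{B}_i}(L'_{\mathcal{B}_i})]=0$ for all $i$ and all $x\in E\setminus\mathrm{supp}(\mathcal{B}_i)$.
   Context: All Lie algebras are over a fixed field; $\mathcal{F}(X)$ is the free Lie algebra on $X$, $\langle S\rangle$ the ideal generated by $S$, and $M'=[M,M]$ the derived algebra. A set-arrangement on a finite set $E$ is a set $\mathcal{A}$ of subsets of $E$ with $|A|\ge3$ for all $A\in\mathcal{A}$ and $|A\cap B|\le1$ for distinct $A,B\in\mathcal{A}$. For $\mathcal{B}\subseteq\mathcal{A}$ put $\mathrm{supp}(\mathcal{B})=\bigcup_{B\in\mathcal{B}}B$; $\mathcal{B}$ is closed in $\mathcal{A}$ if $|A\cap\mathrm{supp}(\mathcal{B})|\le1$ for all $A\in\mathcal{A}\setminus\mathcal{B}$. For such $\mathcal{B}$, $L_{\mathcal{B}}=\mathcal{F}(\mathrm{supp}(\mathcal{B}))/\langle R_{\mathcal{B}}\rangle$ where $R_{\mathcal{B}}=\bigcup_{B\in\mathcal{B}}R_B\cup\{[x,y]:\ x,y\in\mathrm{supp}(\mathcal{B}),\ \{x,y\}\not\subseteq B\text{ for all }B\in\mathcal{B}\}$. Elements of $E$ are identified with their images in $\mathcal{L}$. *)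

(* Lie algebras over a field K, presented Lie algebras via
   formal Lie terms modulo "equality in every Lie algebra satisfying the
   relations" (= equality in F(X)/<R>). *)
From HB Require Import structures.
From mathcomp Require Import all_boot all_order all_algebra.
Set Implicit Arguments. Unset Strict Implicit. Unset Printing Implicit Defensive.
Import GRing.Theory.
Local Open Scope ring_scope.

Record lieAlg (K : fieldType) := LieAlg {
  lie_car :> lmodType K;
  lie_br : lie_car -> lie_car -> lie_car;
  lie_brDl : forall (a : K) (x y z : lie_car),
      lie_br (a *: x + y) z = a *: lie_br x z + lie_br y z;
  lie_brDr : forall (a : K) (x y z : lie_car),
      lie_br x (a *: y + z) = a *: lie_br x y + lie_br x z;
  lie_brxx : forall x : lie_car, lie_br x x = 0;
  lie_jacobi : forall x y z : lie_car,
      lie_br x (lie_br y z) + lie_br y (lie_br z x) + lie_br z (lie_br x y) = 0 }.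

Inductive lterm (K T : Type) :=
| LGen of T
| LZero
| LAdd of lterm K T & lterm K T
| LScale of K & lterm K T
| LBr of lterm K T & lterm K T.
Arguments LZero {K T}.
Arguments LGen {K T} _.
Arguments LAdd {K T} _ _.
Arguments LScale {K T} _ _.
Arguments LBr {K T} _ _.

Section Terms.
Variables (K : fieldType) (E : finType).
Local Notation term := (lterm K E).

Fixpoint leval (M : lieAlg K) (f : E -> M) (t : term) : M :=
  match t with
  | LGen x => f x
  | LZero => 0
  | LAdd a b => leval f a + leval f b
  | LScale c a => c *: leval f a
  | LBr a b => lie_br (leval f a) (leval f b)
  end.

Fixpoint lsubst (g : E -> term) (t : term) : term :=
  match t with
  | LGen x => g x
  | LZero => LZero
  | LAdd a b => LAdd (lsubst g a) (lsubst g b)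
  | LScale c a => LScale c (lsubst g a)
  | LBr a b => LBr (lsubst g a) (lsubst g b)
  end.

(* t only involves generators from S, i.e. t represents an element of F(S) *)
Fixpoint onS (S : {set E}) (t : term) : bool :=
  match t with
  | LGen x => x \in S
  | LZero => true
  | LAdd a b => onS S a && onS S b
  | LScale _ a => onS S a
  | LBr a b => onS S a && onS S b
  end.

Definition rels := term -> Prop.

Definition models (M : lieAlg K) (f : E -> M) (R : rels) : Prop :=
  forall r, R r -> leval f r = 0.

(* t = u in F(E)/<R> (for terms over S, and relators over S, this is
   equality in F(S)/<R>) *)
Definition lequiv (R : rels) (t u : term) : Prop :=
  forall (M : lieAlg K) (f : E -> M), models f R -> leval f t = leval f u.

Definition noRels : rels := fun _ => False.

Definition sumBr (ps : seq (term * term)) : term :=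
  foldr (fun p acc => LAdd (LBr p.1 p.2) acc) LZero ps.

(* t (over S) lies in the derived algebra [M,M] of M = F(S)/<R>:
   it is a sum of brackets of elements of M. *)
Definition inDerived (R : rels) (S : {set E}) (t : term) : Prop :=
  exists ps : seq (term * term),
    all (fun p => onS S p.1 && onS S p.2) ps /\ lequiv R t (sumBr ps).

(* I is an ideal of F(E)/<R> (as a set of representing terms) *)
Definition isIdeal (R : rels) (I : term -> Prop) : Prop :=
  [/\ (forall t u, lequiv R t u -> I t -> I u),
      I LZero,
      (forall t u, I t -> I u -> I (LAdd t u)),
      (forall c t, I t -> I (LScale c t)) &
      (forall t u, I t -> I (LBr u t))].

Definition idealGen (R : rels) (G : term -> Prop) (t : term) : Prop :=
  forall I, isIdeal R I -> (forall g, G g -> I g) -> I t.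

Definition set_arrangement (Ar : {set {set E}}) : Prop :=
  (forall A, A \in Ar -> 3 <= #|A|)%N /\
  (forall A B, A \in Ar -> B \in Ar -> A != B -> #|A :&: B| <= 1)%N.

Definition supp (Bs : {set {set E}}) : {set E} := \bigcup_(B in Bs) B.

Definition closed_in (Bs Ar : {set {set E}}) : Prop :=
  Bs \subset Ar /\ (forall A, A \in Ar -> A \notin Bs -> #|A :&: supp Bs| <= 1)%N.

Definition RB (RA : {set E} -> rels) (Bs : {set {set E}}) : rels :=
  fun r => (exists2 B, B \in Bs & RA B r) \/
    exists x y, [/\ x \in supp Bs, y \in supp Bs,
      (forall B, B \in Bs -> ~ (x \in B /\ y \in B)) &
      r = LBr (LGen x) (LGen y)].

Definition Rglob (RA : {set E} -> rels) (Ar : {set {set E}}) : rels :=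
  fun r => (exists2 A, A \in Ar & RA A r) \/
    exists x y, (forall A, A \in Ar -> ~ (x \in A /\ y \in A)) /\
      r = LBr (LGen x) (LGen y).

Definition piB (Bs : {set {set E}}) (t : term) : term :=
  lsubst (fun x => if x \in supp Bs then LGen x else LZero) t.

End Terms.

From mathcomp Require Import all_boot all_order all_algebra.
Set Implicit Arguments. Unset Strict Implicit. Unset Printing Implicit Defensive.
Import GRing.Theory.
Local Open Scope ring_scope.

(* Write S_i = supp(B_i). The derived algebra L' is the ideal of L generated by
   the brackets [x,y] of generators. Such a bracket is 0 in L unless x, y lie in
   a common A of Ar, and then A belongs to a unique B_i and [x,y] lies in
   s_i(L'_{B_i}). Bracketing s_i(u) with a generator x stays in s_i(L'_{B_i})
   when x is in S_i, and is a generator of G otherwise. Hence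
   L' = sum_i s_i(L'_{B_i}) + <G>.
   For j <> i, pi_j kills s_i(L'_{B_i}): by closedness two distinct points of
   S_i never lie in a common block of B_j, so they commute in L_{B_j}. Also pi_j
   kills G, and pi_j o s_j is the identity. So an element sum_i s_i(u_i) + n of
   J has every u_j = 0, i.e. it is n, which lies in <G>. Conversely J is an
   ideal containing G. *)

Section LieAlgebraTheory.
Variables (K : fieldType) (M : lieAlg K).
Implicit Types x y z : M.
Local Notation br := (@lie_br K M).

Lemma lie_br_addl x y z : br (x + y) z = br x z + br y z.
Proof. by have := lie_brDl 1 x y z; rewrite !scale1r. Qed.

Lemma lie_br_addr z x y : br z (x + y) = br z x + br z y.
Proof. by have := lie_brDr 1 z x y; rewrite !scale1r. Qed.

Lemma lie_br0l z : br 0 z = 0.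
Proof. by apply/(addrI (br 0 z)); rewrite -lie_br_addl !addr0. Qed.

Lemma lie_br0r z : br z 0 = 0.
Proof. by apply/(addrI (br z 0)); rewrite -lie_br_addr !addr0. Qed.

Lemma lie_brZl (a : K) x z : br (a *: x) z = a *: br x z.
Proof. by have := lie_brDl a x 0 z; rewrite !addr0 lie_br0l addr0. Qed.

Lemma lie_brZr (a : K) x z : br z (a *: x) = a *: br z x.
Proof. by have := lie_brDr a z x 0; rewrite !addr0 lie_br0r addr0. Qed.

Lemma lie_brNr x z : br z (- x) = - br z x.
Proof. by rewrite -scaleN1r lie_brZr scaleN1r. Qed.

Lemma lie_br_antisym x y : br x y = - br y x.
Proof.
apply/eqP; rewrite -addr_eq0; have := lie_brxx (x + y).
by rewrite lie_br_addl !lie_br_addr !lie_brxx add0r addr0 => ->.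
Qed.

Lemma lie_br_derivation x y z : br x (br y z) = br (br x y) z + br y (br x z).
Proof.
have := lie_jacobi x y z.
rewrite (lie_br_antisym z x) lie_brNr (lie_br_antisym z) -addrA -opprD => /eqP.
by rewrite subr_eq0 addrC => /eqP.
Qed.

End LieAlgebraTheory.

Section LieTerms.
Variables (K : fieldType) (E : finType).
Local Notation term := (lterm K E).
Implicit Types (t u : term) (S : {set E}) (R : rels K E) (I : term -> Prop).

Lemma onS_setT t : onS setT t.
Proof.
by elim: t => [x||a IHa b IHb|c a IH|a IHa b IHb] /=; rewrite ?in_setT ?IHa ?IHb.
Qed.

Lemma eq_in_leval (M : lieAlg K) (f g : E -> M) S t :
  {in S, f =1 g} -> onS S t -> leval f t = leval g t.
Proof.
move=> eq_fg; elim: t => [x||a IHa b IHb|c a IH|a IHa b IHb] //=.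
- exact: eq_fg.
- by case/andP=> /IHa-> /IHb->.
- by move/IH->.
- by case/andP=> /IHa-> /IHb->.
Qed.

Lemma leval_lsubst (M : lieAlg K) (f : E -> M) (g : E -> term) t :
  leval f (lsubst g t) = leval (fun x => leval f (g x)) t.
Proof. by elim: t => [x||a /= -> b ->|c a /= ->|a /= -> b ->]. Qed.

Lemma leval_sumBr (M : lieAlg K) (f : E -> M) ps :
  leval f (sumBr ps) = \sum_(p <- ps) lie_br (leval f p.1) (leval f p.2).
Proof. by elim: ps => [|p ps IH]; rewrite ?big_nil ?big_cons //= IH. Qed.

Lemma leval_big (M : lieAlg K) (f : E -> M) (I : Type) (r : seq I) (P : pred I)
    (F : I -> term) :
  leval f (\big[LAdd/LZero]_(i <- r | P i) F i) = \sum_(i <- r | P i) leval f (F i).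
Proof. exact: (big_morph (leval f)). Qed.

Definition restrict (M : lieAlg K) S (f : E -> M) (x : E) : M :=
  if x \in S then f x else 0.

Lemma leval_piB (M : lieAlg K) (f : E -> M) Bs t :
  leval f (piB Bs t) = leval (restrict (supp Bs) f) t.
Proof.
rewrite leval_lsubst; apply: (eq_in_leval _ (onS_setT t)) => x _.
by rewrite /restrict; case: ifP.
Qed.

Lemma lie_br_leval_eq0 (M : lieAlg K) (f : E -> M) S a b :
  {in S &, forall x y, lie_br (f x) (f y) = 0} -> onS S a -> onS S b ->
  lie_br (leval f a) (leval f b) = 0.
Proof.
move=> fS_comm.
have gen_comm x t : x \in S -> onS S t -> lie_br (f x) (leval f t) = 0.
  move=> xS; elim: t => [y||c IHc d IHd|e c IH|c IHc d IHd] /=.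
  - exact: fS_comm.
  - by rewrite lie_br0r.
  - by case/andP=> /IHc hc /IHd hd; rewrite lie_br_addr hc hd addr0.
  - by move/IH=> h; rewrite lie_brZr h scaler0.
  - case/andP=> /IHc hc /IHd hd.
    by rewrite lie_br_derivation hc hd lie_br0l lie_br0r addr0.
elim: a b => [x||c IHc d IHd|e c IH|c IHc d IHd] b /=.
- exact: gen_comm.
- by rewrite lie_br0l.
- by case/andP=> hc hd hb; rewrite lie_br_addl IHc // IHd // addr0.
- by move=> hc hb; rewrite lie_brZl IH // scaler0.
- by case/andP=> hc hd hb; rewrite IHc // lie_br0l.
Qed.

Lemma leval_inDerived_eq0 (M : lieAlg K) (f : E -> M) R S t :
  models f R -> {in S &, forall x y, lie_br (f x) (f y) = 0} -> inDerived R S t ->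
  leval f t = 0.
Proof.
move=> fR fS_comm [ps [ps_S t_ps]]; rewrite (t_ps _ _ fR) leval_sumBr.
elim: ps ps_S {t_ps} => [|p ps IH]; rewrite ?big_nil ?big_cons //=.
by case/andP=> /andP[p1 p2] /IH->; rewrite (lie_br_leval_eq0 fS_comm) ?add0r.
Qed.

Lemma inDerived0 R S : inDerived R S LZero.
Proof. by exists [::]. Qed.

Lemma inDerived_lequiv R S t u : lequiv R t u -> inDerived R S t -> inDerived R S u.
Proof.
by move=> t_u [ps [ps_S t_ps]]; exists ps; split=> // M f fR; rewrite -t_u ?t_ps.
Qed.

Lemma inDerivedD R S t u :
  inDerived R S t -> inDerived R S u -> inDerived R S (LAdd t u).
Proof.
move=> [ps [ps_S t_ps]] [qs [qs_S u_qs]]; exists (ps ++ qs).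
rewrite all_cat ps_S qs_S; split=> // M f fR /=.
by rewrite t_ps ?u_qs ?leval_sumBr ?big_cat.
Qed.

Lemma inDerivedZ R S c t : inDerived R S t -> inDerived R S (LScale c t).
Proof.
move=> [ps [ps_S t_ps]]; exists [seq (LScale c p.1, p.2) | p <- ps]; split.
  by rewrite all_map; apply: sub_all ps_S.
move=> M f fR /=; rewrite t_ps // !leval_sumBr big_map scaler_sumr.
by apply: eq_bigr => p _; rewrite lie_brZl.
Qed.

Lemma inDerived_br R S a b : onS S a -> onS S b -> inDerived R S (LBr a b).
Proof.
by move=> aS bS; exists [:: (a, b)]; rewrite /= aS bS; split=> // M f _ /=; rewrite addr0.
Qed.

Lemma isIdeal_brl R I t u : isIdeal R I -> I t -> I (LBr t u).
Proof.
case=> I_equiv _ _ I_scale I_br It.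
apply: (I_equiv (LScale (-1) (LBr u t))); last exact/I_scale/I_br.
by move=> M f _ /=; rewrite scaleN1r lie_br_antisym opprK.
Qed.

Lemma isIdeal_gen R I :
  (forall t u, lequiv R t u -> I t -> I u) -> I LZero ->
  (forall t u, I t -> I u -> I (LAdd t u)) -> (forall c t, I t -> I (LScale c t)) ->
  (forall x t, I t -> I (LBr (LGen x) t)) -> isIdeal R I.
Proof.
move=> I_equiv I0 I_add I_scale I_brgen; split=> // t a It.
elim: a t It => [x||a IHa b IHb|c a IH|a IHa b IHb] t It.
- exact: I_brgen.
- by apply: I_equiv I0 => M f _ /=; rewrite lie_br0l.
- by apply: I_equiv (I_add _ _ (IHa t It) (IHb t It)) => M f _ /=; rewrite lie_br_addl.
- by apply: I_equiv (I_scale c _ (IH t It)) => M f _ /=; rewrite lie_brZl.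
- apply: I_equiv (I_add _ _ (IHa _ (IHb t It)) (I_scale (-1) _ (IHb _ (IHa t It)))).
  by move=> M f _ /=; rewrite scaleN1r lie_br_derivation addrK.
Qed.

Lemma inDerived_sub_ideal R I t :
  isIdeal R I -> (forall x y, I (LBr (LGen x) (LGen y))) -> inDerived R setT t -> I t.
Proof.
move=> I_ideal I_brgen [ps [_ t_ps]]; have [I_equiv I0 I_add I_scale I_br] := I_ideal.
have I_brgenl x c : I (LBr (LGen x) c).
  elim: c => [y||a IHa b IHb|c a IH|a IHa b IHb].
  - exact: I_brgen.
  - by apply: I_equiv I0 => M f _ /=; rewrite lie_br0r.
  - by apply: I_equiv (I_add _ _ IHa IHb) => M f _ /=; rewrite lie_br_addr.
  - by apply: I_equiv (I_scale c _ IH) => M f _ /=; rewrite lie_brZr.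
  - apply: I_equiv (I_add _ _ (isIdeal_brl b I_ideal IHa) (I_br _ a IHb)).
    by move=> M f _ /=; rewrite [RHS]lie_br_derivation.
have I_br_all a c : I (LBr a c).
  elim: a c => [x||a IHa b IHb|d a IH|a IHa b IHb] c.
  - exact: I_brgenl.
  - by apply: I_equiv I0 => M f _ /=; rewrite lie_br0l.
  - by apply: I_equiv (I_add _ _ (IHa c) (IHb c)) => M f _ /=; rewrite lie_br_addl.
  - by apply: I_equiv (I_scale d _ (IH c)) => M f _ /=; rewrite lie_brZl.
  - exact: isIdeal_brl c I_ideal (IHa b).
apply: (I_equiv (sumBr ps)) => [M f fR|]; first by rewrite t_ps.
by elim: ps {t_ps} => [|p ps IH] //=; apply: I_add.
Qed.

Lemma isIdeal_inDerived R : isIdeal R (inDerived R setT).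
Proof.
split=> [t u|||c t|t u _].
- exact: inDerived_lequiv.
- exact: inDerived0.
- exact: inDerivedD.
- exact: inDerivedZ.
- exact: inDerived_br (onS_setT u) (onS_setT t).
Qed.

Lemma isIdeal_lequiv0 R : isIdeal R (fun t => lequiv R t LZero).
Proof.
split=> [t u t_u t0|//|t u t0 u0|c t t0|t u t0] M f fR /=.
- by rewrite -t_u ?t0.
- by rewrite t0 ?u0 ?addr0.
- by rewrite t0 ?scaler0.
- by rewrite t0 ?lie_br0r.
Qed.

Lemma isIdeal_meet R I1 I2 :
  isIdeal R I1 -> isIdeal R I2 -> isIdeal R (fun t => I1 t /\ I2 t).
Proof.
case=> [e1 z1 a1 s1 b1] [e2 z2 a2 s2 b2].
split=> [t u tu [] *|//|t u [] ? ? [] *|c t [] *|t u [] *]; split; eauto.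
Qed.

Lemma isIdeal_all R (J : Type) (I : J -> term -> Prop) :
  (forall j, isIdeal R (I j)) -> isIdeal R (fun t => forall j, I j t).
Proof.
move=> I_ideal; split=> [t u tu It j|j|t u It Iu j|c t It j|t u It j];
  have [? ? ? ? ?] := I_ideal j; eauto.
Qed.

Lemma isIdeal_ker_piB R R' Bs :
  (forall (M : lieAlg K) (f : E -> M),
     models f R' -> models (restrict (supp Bs) f) R) ->
  isIdeal R (fun t => lequiv R' (piB Bs t) LZero).
Proof.
move=> restrictR; split=> [t u t_u t0|//|t u t0 u0|c t t0|t u t0] M f fR /=.
- by rewrite leval_piB -(t_u _ _ (restrictR _ _ fR)) -leval_piB t0.
- by rewrite t0 ?u0 ?addr0.
- by rewrite t0 ?scaler0.
- by rewrite t0 ?lie_br0r.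
Qed.

Lemma idealGen_ideal R G : isIdeal R (idealGen R G).
Proof.
split=> [t u t_u Gt||t u Gt Gu|c t Gt|t u Gt] I I_ideal GI;
  have [I_equiv I0 I_add I_scale I_br] := I_ideal.
- exact: I_equiv t_u (Gt I I_ideal GI).
- exact: I0.
- exact: I_add (Gt I I_ideal GI) (Gu I I_ideal GI).
- exact/I_scale/(Gt I I_ideal GI).
- exact/I_br/(Gt I I_ideal GI).
Qed.

Lemma idealGen_gen R G g : G g -> idealGen R G g.
Proof. by move=> Gg I _; apply. Qed.

End LieTerms.

Section BlockDecomposition.
Variables (K : fieldType) (E : finType) (Ar : {set {set E}})
  (RA : {set E} -> rels K E) (k : nat) (B : 'I_k -> {set {set E}}).
Hypotheses
  (RA_derived : forall A, A \in Ar -> forall r, RA A r ->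
     onS A r /\ inDerived (@noRels K E) A r)
  (B_disjoint : forall i j, i != j -> [disjoint B i & B j])
  (B_closed : forall i, closed_in (B i) Ar)
  (B_cover : \bigcup_(i < k) B i = Ar).
Local Notation term := (lterm K E).
Local Notation R := (Rglob RA Ar).
Local Notation S i := (supp (B i)).
Local Notation RBi i := (RB RA (B i)).
Implicit Types (i j : 'I_k) (t u : term).

Lemma mem_supp (Bs : {set {set E}}) A x : A \in Bs -> x \in A -> x \in supp Bs.
Proof. by move=> ABs xA; apply/bigcupP; exists A. Qed.

Lemma B_sub_Ar i A : A \in B i -> A \in Ar.
Proof. exact: subsetP (B_closed i).1 A. Qed.

Lemma block_of_Ar A : A \in Ar -> exists i, A \in B i.
Proof. by rewrite -B_cover => /bigcupP[i _ Ai]; exists i. Qed.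

Lemma eq_in_supp_other_block i j A x y : i != j -> A \in B j ->
  x \in S i -> y \in S i -> x \in A -> y \in A -> x = y.
Proof.
move=> ij Aj xSi ySi xA yA.
have Ai : A \notin B i by rewrite (disjointFl (B_disjoint ij) Aj).
have /card_le1_eqP := (B_closed i).2 A (B_sub_Ar Aj) Ai.
by apply; rewrite inE ?xA ?yA.
Qed.

Lemma models_RB i (M : lieAlg K) (f : E -> M) : models f R -> models f (RBi i).
Proof.
move=> fR r [[A Ai RAr] | [x [y [xSi ySi not_in_block ->]]]].
  by apply: fR; left; exists A => //; apply: B_sub_Ar Ai.
have [<-|xy] := eqVneq x y; first exact: lie_brxx.
apply: fR; right; exists x, y; split=> // A /block_of_Ar[j Aj] [xA yA].
case: (eqVneq i j) Aj => [<- Ai|ij Aj]; first exact: not_in_block A Ai (conj xA yA).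
by move: xy; rewrite (eq_in_supp_other_block ij Aj xSi ySi xA yA) eqxx.
Qed.

Lemma lequiv_RB i t u : lequiv (RBi i) t u -> lequiv R t u.
Proof. by move=> t_u M f fR; apply/t_u/models_RB. Qed.

Lemma models_restrict j (M : lieAlg K) (f : E -> M) :
  models f (RBi j) -> models (restrict (S j) f) R.
Proof.
move=> fRj r [[A AAr RAr] | [x [y [not_in_A ->]]]].
  have [rA r_derived] := RA_derived AAr RAr.
  have [Aj|Aj] := boolP (A \in B j).
    rewrite (@eq_in_leval _ _ _ _ f A) //; first by apply: fRj; left; exists A.
    by move=> x xA; rewrite /restrict (mem_supp Aj xA).
  (* A meets S_j in at most one point, so the generators of A commute under
     restrict (S j) f, which therefore kills the derived relator r. *)
  apply: (leval_inDerived_eq0 _ _ r_derived) => [? []|x y xA yA].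
  rewrite /restrict; case: ifP => xSj; case: ifP => ySj; rewrite ?lie_br0l ?lie_br0r //.
  have /card_le1_eqP x_y := (B_closed j).2 A AAr Aj.
  by rewrite (x_y x y) ?lie_brxx // inE ?xA ?yA ?xSj ?ySj.
rewrite /= /restrict; case: ifP => xSj; case: ifP => ySj; rewrite ?lie_br0l ?lie_br0r //.
apply: (fRj (LBr (LGen x) (LGen y))); right; exists x, y; split=> // A Aj.
exact/not_in_A/B_sub_Ar/Aj.
Qed.

Definition blockDerived i u := onS (S i) u /\ inDerived (RBi i) (S i) u.

Lemma leval_restrict_other i j (M : lieAlg K) (f : E -> M) u : i != j ->
  models f (RBi j) -> blockDerived i u -> leval (restrict (S j) f) u = 0.
Proof.
move=> ij fRj [_ u_derived].
apply: (leval_inDerived_eq0 _ _ u_derived) => [|x y xSi ySi].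
  exact/models_RB/models_restrict.
rewrite /restrict; case: ifP => xSj; case: ifP => ySj; rewrite ?lie_br0l ?lie_br0r //.
have [<-|xy] := eqVneq x y; first exact: lie_brxx.
apply: (fRj (LBr (LGen x) (LGen y))); right; exists x, y; split=> // A Aj [xA yA].
by move: xy; rewrite (eq_in_supp_other_block ij Aj xSi ySi xA yA) eqxx.
Qed.

Definition Jset t := inDerived R setT t /\ forall i, lequiv (RBi i) (piB (B i) t) LZero.

Definition Gset t := exists i u x,
  [/\ x \notin S i, onS (S i) u, inDerived (RBi i) (S i) u & t = LBr (LGen x) u].

Lemma isIdeal_Jset : isIdeal R Jset.
Proof.
apply: isIdeal_meet; first exact: isIdeal_inDerived.
by apply: isIdeal_all => i; apply: isIdeal_ker_piB; apply: models_restrict.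
Qed.

Lemma Gset_sub_Jset t : Gset t -> Jset t.
Proof.
move=> [i [u [x [xSi uSi u_derived ->]]]]; split.
  exact: inDerived_br (onS_setT _) (onS_setT _).
move=> j M f fRj; rewrite leval_piB /=.
have [<-|ij] := eqVneq i j; first by rewrite {1}/restrict (negbTE xSi) lie_br0l.
by rewrite (leval_restrict_other ij fRj) ?lie_br0r.
Qed.

Lemma idealGen_sub_Jset t : idealGen R Gset t -> Jset t.
Proof. by apply; [exact: isIdeal_Jset | exact: Gset_sub_Jset]. Qed.

Definition blocks_plus_G t := exists (u : 'I_k -> term) n,
  [/\ forall i, blockDerived i (u i), idealGen R Gset n &
      lequiv R t (LAdd (\big[LAdd/LZero]_(i < k) u i) n)].

Lemma blockDerived0 i : blockDerived i LZero.
Proof. by split=> //; apply: inDerived0. Qed.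

Lemma blocks_plus_G_brl x t : blocks_plus_G t -> blocks_plus_G (LBr (LGen x) t).
Proof.
move=> [u [n [u_derived Gn t_un]]].
have [_ G0 G_add _ G_br] := idealGen_ideal R Gset.
pose inside i := if x \in S i then LBr (LGen x) (u i) else LZero.
pose outside i := if x \in S i then LZero else LBr (LGen x) (u i).
exists inside, (LAdd (LBr (LGen x) n) (\big[LAdd/LZero]_(i < k) outside i)); split.
- move=> i; rewrite /inside; case: ifP => xSi; last exact: blockDerived0.
  have [uSi _] := u_derived i.
  by split; [rewrite /= xSi | apply: inDerived_br; rewrite //= xSi].
- apply: (G_add _ _ (G_br _ _ Gn)).
  apply: big_ind => // i _.
  rewrite /outside; case: ifP => xSi //; apply: idealGen_gen.
  by have [uSi u_der] := u_derived i; exists i, (u i), x; rewrite xSi.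
move=> M f fR /=; rewrite t_un //= !leval_big lie_br_addr.
rewrite (big_morph _ (lie_br_addr (f x)) (lie_br0r (f x))).
rewrite [RHS]addrCA [LHS]addrC -big_split; congr (_ + _); apply: eq_bigr => i _.
by rewrite /inside /outside; case: ifP => _ /=; rewrite ?addr0 ?add0r.
Qed.

Lemma isIdeal_blocks_plus_G : isIdeal R blocks_plus_G.
Proof.
have [_ G0 G_add G_scale _] := idealGen_ideal R Gset.
apply: isIdeal_gen; last exact: blocks_plus_G_brl.
- move=> t t' t_t' [u [n [u_der Gn t_un]]].
  by exists u, n; split=> // M f fR; rewrite -t_t' ?t_un.
- exists (fun=> LZero), LZero; split=> //; first by move=> i; apply: blockDerived0.
  by move=> M f _ /=; rewrite leval_big big1 ?addr0.
- move=> t t' [u [n [u_der Gn t_un]]] [u' [n' [u'_der Gn' t'_un']]].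
  exists (fun i => LAdd (u i) (u' i)), (LAdd n n'); split.
  + move=> i; have [uS u_d] := u_der i; have [u'S u'_d] := u'_der i.
    by split; [rewrite /= uS u'S | apply: inDerivedD].
  + exact: G_add.
  + by move=> M f fR /=; rewrite t_un // t'_un' //= !leval_big big_split addrACA.
- move=> c t [u [n [u_der Gn t_un]]].
  exists (fun i => LScale c (u i)), (LScale c n); split.
  + by move=> i; have [uS u_d] := u_der i; split; last exact: inDerivedZ.
  + exact: G_scale.
  + by move=> M f fR /=; rewrite t_un //= !leval_big scalerDr scaler_sumr.
Qed.

Lemma blocks_plus_G_brgen x y : blocks_plus_G (LBr (LGen x) (LGen y)).
Proof.
have [bpG_equiv bpG0 _ _ _] := isIdeal_blocks_plus_G.
have [/existsP[A /and3P[AAr xA yA]]|not_in_A] :=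
  boolP [exists A in Ar, (x \in A) && (y \in A)]; last first.
  apply: bpG_equiv bpG0 => M f fR; symmetry; apply: (fR (LBr _ _)).
  right; exists x, y; split=> // A AAr [xA yA]; move/negP: not_in_A; apply.
  by apply/existsP; exists A; rewrite AAr xA yA.
have [i Ai] := block_of_Ar AAr.
have [xSi ySi] := (mem_supp Ai xA, mem_supp Ai yA).
exists (fun j => if j == i then LBr (LGen x) (LGen y) else LZero), LZero; split.
- move=> j; case: eqP => [->|_]; last exact: blockDerived0.
  by split; [rewrite /= xSi ySi | apply: inDerived_br; rewrite /= ?xSi ?ySi].
- by case: (idealGen_ideal R Gset).
- move=> M f _ /=; rewrite leval_big (bigD1 i) //= eqxx big1 ?addr0 // => j.
  by move/negbTE->.
Qed.

Lemma Jset_sub_idealGen t : Jset t -> idealGen R Gset t.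
Proof.
move=> [t_derived t_ker].
have [u [n [u_der Gn t_un]]] :=
  inDerived_sub_ideal isIdeal_blocks_plus_G blocks_plus_G_brgen t_derived.
have u0 j : lequiv (RBi j) (u j) LZero.
  move=> M f fRj; have := t_ker j M f fRj.
  have n0 : leval (restrict (S j) f) n = 0.
    by rewrite -leval_piB; apply: (idealGen_sub_Jset Gn).2.
  rewrite leval_piB (t_un _ _ (models_restrict fRj)) /= leval_big n0 addr0.
  rewrite (bigD1 j) //= big1 ?addr0 => [<-|i ij]; last first.
    exact: leval_restrict_other ij fRj (u_der i).
  by apply: eq_in_leval (u_der j).1 => x xSj; rewrite /restrict xSj.
have [G_equiv _ _ _ _] := idealGen_ideal R Gset.
apply: G_equiv Gn => M f fR; rewrite t_un //= leval_big big1 ?add0r // => i _.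
exact: lequiv_RB (u0 i) _ _ fR.
Qed.

End BlockDecomposition.

Theorem mainTheorem2 (K : fieldType) (E : finType) (Ar : {set {set E}})
  (RA : {set E} -> rels K E) (k : nat) (B : 'I_k -> {set {set E}}) :
  set_arrangement Ar ->
  (forall A, A \in Ar -> forall r, RA A r -> onS A r /\ inDerived (@noRels K E) A r) ->
  (forall i j, i != j -> [disjoint B i & B j]) ->
  (forall i, closed_in (B i) Ar) ->
  \bigcup_(i < k) B i = Ar ->
  let R := Rglob RA Ar in
  let J := fun t => inDerived R setT t /\
             forall i, lequiv (RB RA (B i)) (piB (B i) t) LZero in
  let G := fun g => exists i u x,
             [/\ x \notin supp (B i), onS (supp (B i)) u,
                 inDerived (RB RA (B i)) (supp (B i)) u &
                 g = LBr (LGen x) u] in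
  (forall t, J t <-> idealGen R G t) /\
  ((forall t, J t -> lequiv R t LZero) <->
   (forall i x u, x \notin supp (B i) -> onS (supp (B i)) u ->
      inDerived (RB RA (B i)) (supp (B i)) u ->
      lequiv R (LBr (LGen x) u) LZero)).
Proof.
move=> _ RA_derived B_disjoint B_closed B_cover R J G.
have J_G t : J t <-> idealGen R G t.
  split; first exact: (Jset_sub_idealGen RA_derived B_disjoint B_closed B_cover (t := t)).
  exact: (idealGen_sub_Jset RA_derived B_disjoint B_closed B_cover (t := t)).
split=> //; split=> [J0 i x u xSi uSi u_derived | G0 t /J_G Gt].
  by apply/J0/J_G; apply: idealGen_gen; exists i, u, x.
apply: (Gt _ (isIdeal_lequiv0 R)) => g [i [u [x [xSi uSi u_derived ->]]]].
exact: G0 xSi uSi u_derived.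
Qed.
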